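(* Let $\mathcal{A}\subseteq\mathbb{R}^3$ and let $\varphi_1,\ldots,\varphi_N\in L^2(\mathcal{A})$ be pairwise non-parallel with $\boldsymbol{\Psi}=\int_{\mathcal{A}}\boldsymbol{\varphi}^{\mathsf{H}}\boldsymbol{\varphi}\,\mathrm{d}\mathbf{r}$ positive definite, $\boldsymbol{\varphi}(\mathbf{r})=[\varphi_1(\mathbf{r}),\ldots,\varphi_N(\mathbf{r})]$, eigendecomposition $\boldsymbol{\Psi}=\mathbf{U}\,\mathrm{diag}(\lambda_1,\ldots,\lambda_N)\mathbf{U}^{\mathsf{H}}$, $\lambda_n>0$. For Hermitian $\mathbf{M}$ let $T_{\mathbf{M}}$ be the operator on $L^2(\mathcal{A})$ with kernel $\delta(\mathbf{r}-\mathbf{r}')-\boldsymbol{\varphi}(\mathbf{r})\mathbf{M}\boldsymbol{\varphi}^{\mathsf{H}}(\mathbf{r}')$. Let $C_\varphi=T_{-\mathbf{I}_N}$, $\overline{C}_\varphi=T_{(\mathbf{I}_N+\boldsymbol{\Psi})^{-1}}$, $\overline{B}_\varphi=T_{\overline{\mathbf{B}}_{\boldsymbol\Psi}}$ with $\overline{\mathbf{B}}_{\boldsymbol\Psi}=\mathbf{U}\,\mathrm{diag}\big(\tfrac{1+\sqrt{1+\lambda_n}}{\lambda_n\sqrt{1+\lambda_n}}\big)\mathbf{U}^{\mathsf{H}}$, and $B_\varphi=T_{\mathbf{B}_{\boldsymbol\Psi}}$ with $\mathbf{B}_{\boldsymbol\Psi}=\mathbf{U}\,\mathrm{diag}\big(\tfrac{1+\sqrt{1+\lambda_n}}{\lambda_n}\big)\mathbf{U}^{\mathsf{H}}$.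 Then $\overline{B}_\varphi\overline{B}_\varphi=\overline{C}_\varphi$ and $B_\varphi B_\varphi=C_\varphi$, i.e. $\int_{\mathcal{A}}\overline{B}_\varphi(\mathbf{r}_1,\mathbf{r})\overline{B}_\varphi(\mathbf{r},\mathbf{r}_2)\,\mathrm{d}\mathbf{r}=\overline{C}_\varphi(\mathbf{r}_1,\mathbf{r}_2)$ and $\int_{\mathcal{A}}B_\varphi(\mathbf{r}_1,\mathbf{r})B_\varphi(\mathbf{r},\mathbf{r}_2)\,\mathrm{d}\mathbf{r}=C_\varphi(\mathbf{r}_1,\mathbf{r}_2)$.
   Context: Kernels containing $\delta(\mathbf{r}-\mathbf{r}')$ denote the identity plus a finite-rank integral operator. *)

From HB Require Import structures.
From mathcomp Require Import all_boot all_order all_algebra.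
From mathcomp Require Import complex.
From mathcomp Require Import all_classical all_reals all_analysis.
Set Implicit Arguments. Unset Strict Implicit. Unset Printing Implicit Defensive.
Import Order.TTheory GRing.Theory Num.Theory.
Local Open Scope classical_set_scope.
Local Open Scope ring_scope.

Notation R3 R :=
  ((measurableTypeR R * measurableTypeR R) * measurableTypeR R)%type.

Definition leb3 (R : realType) : {measure set (R3 R) -> \bar R} :=
  ((@lebesgue_measure R \x @lebesgue_measure R) \x @lebesgue_measure R)%E.

Definition cnorm2 (R : rcfType) (z : R[i]) : R :=
  complex.Re z ^+ 2 + complex.Im z ^+ 2.

Definition cint (R : realType) (A : set (R3 R)) (g : R3 R -> R[i]) : R[i] :=
  real_complex R (Rintegral (leb3 R) A (fun x => complex.Re (g x)))
  + complex.Complex 0 1 * real_complex R (Rintegral (leb3 R) A (fun x => complex.Im (g x))).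

Definition inL2 (R : realType) (A : set (R3 R)) (f : R3 R -> R[i]) : Prop :=
  [/\ measurable_fun A (fun x => complex.Re (f x)),
      measurable_fun A (fun x => complex.Im (f x)) &
      (\int[leb3 R]_(x in A) (cnorm2 (f x))%:E < +oo)%E].

Definition adjmx (R : rcfType) m n (M : 'M[R[i]]_(m, n)) : 'M[R[i]]_(n, m) :=
  (map_mx (@complex.conjc R) M)^T.

Definition hermitian (R : rcfType) n (M : 'M[R[i]]_n) : Prop := adjmx M = M.

Definition posdef (R : rcfType) n (M : 'M[R[i]]_n) : Prop :=
  hermitian M /\ forall v : 'cV[R[i]]_n, v != 0 -> 0 < (adjmx v *m M *m v) 0 0.

Definition unitary (R : rcfType) n (U : 'M[R[i]]_n) : Prop :=
  U *m adjmx U = 1%:M /\ adjmx U *m U = 1%:M.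

(* Gram matrix  Psi = \int_A phi^H phi dr,  Psi_{ij} = \int_A conj(phi_i) phi_j. *)
Definition gram (R : realType) N (A : set (R3 R)) (phi : 'I_N -> R3 R -> R[i])
  : 'M[R[i]]_N :=
  \matrix_(i, j) cint A (fun x => complex.conjc (phi i x) * phi j x).

(* T_M : operator on L^2(A) with kernel delta(r - r') - phi(r) M phi^H(r'):
   (T_M f)(r) = f(r) - sum_{i,j} phi_i(r) M_{ij} \int_A conj(phi_j(r')) f(r') dr'. *)
Definition Top (R : realType) N (A : set (R3 R)) (phi : 'I_N -> R3 R -> R[i])
  (M : 'M[R[i]]_N) (f : R3 R -> R[i]) : R3 R -> R[i] :=
  fun r => f r - \sum_(i < N) \sum_(j < N)
             phi i r * M i j * cint A (fun r' => complex.conjc (phi j r') * f r').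

Definition Bbar_mx (R : realType) N (U : 'M[R[i]]_N) (lam : 'I_N -> R) : 'M[R[i]]_N :=
  U *m diag_mx (\row_n real_complex R ((1 + Num.sqrt (1 + lam n))
                         / (lam n * Num.sqrt (1 + lam n)))) *m adjmx U.

Definition B_mx (R : realType) N (U : 'M[R[i]]_N) (lam : 'I_N -> R) : 'M[R[i]]_N :=
  U *m diag_mx (\row_n real_complex R ((1 + Num.sqrt (1 + lam n)) / lam n)) *m adjmx U.

(* Write T_M f = f - phi (M <phi, f>), where <phi, f> is the column of inner
   products <phi_j, f>.  Since <phi, phi v> = Psi v, applying <phi, .> to T_M f
   gives (I - Psi M) <phi, f>, hence T_M T_M = T_(2M - M Psi M).  When
   M = U diag(d_n) U^H and Psi = U diag(l_n) U^H share the unitary U, the matrix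
   2M - M Psi M is U diag(2 d_n - l_n d_n^2) U^H.  With s = sqrt(1 + l), the
   choice d = (1 + s)/l gives 2d - l d^2 = (1 + s)(1 - s)/l = -1, and the choice
   d = (1 + s)/(l s) gives 1/(1 + l). *)
From HB Require Import structures.
From mathcomp Require Import all_boot all_order all_algebra.
From mathcomp Require Import complex.
From mathcomp Require Import all_classical all_reals all_analysis.
From mathcomp Require Import ring lra.
Import Order.TTheory GRing.Theory Num.Theory.
Local Open Scope classical_set_scope.
Local Open Scope ring_scope.

Section ComplexParts.
Variable R : rcfType.
Implicit Types x y : R[i].

Lemma ReM x y :
  complex.Re (x * y) = complex.Re x * complex.Re y - complex.Im x * complex.Im y.
Proof. by case: x; case: y. Qed.

Lemma ImM x y :
  complex.Im (x * y) = complex.Re x * complex.Im y + complex.Im x * complex.Re y.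
Proof. by case: x; case: y. Qed.

Lemma ReJ x : complex.Re (complex.conjc x) = complex.Re x.
Proof. by case: x. Qed.

Lemma ImJ x : complex.Im (complex.conjc x) = - complex.Im x.
Proof. by case: x. Qed.

End ComplexParts.

Definition cintegrable d (T : measurableType d) (R : realType)
    (mu : {measure set T -> \bar R}) (D : set T) (g : T -> R[i]) :=
  mu.-integrable D (EFin \o (fun x => complex.Re (g x))) /\
  mu.-integrable D (EFin \o (fun x => complex.Im (g x))).
Arguments cintegrable {d T R} mu D g.

Section ComplexIntegrable.
Context {d} {T : measurableType d} {R : realType} {mu : {measure set T -> \bar R}}.
Context {D : set T} (mD : measurable D).
Local Notation cintegrable := (cintegrable mu D).

Lemma integrableM_sqr_le {u v g h : T -> R} :
  measurable_fun D u -> measurable_fun D v ->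
  mu.-integrable D (EFin \o g) -> mu.-integrable D (EFin \o h) ->
  (forall x, D x -> u x ^+ 2 <= g x) -> (forall x, D x -> v x ^+ 2 <= h x) ->
  mu.-integrable D (EFin \o (u \* v)).
Proof.
move=> mu_ mv ig ih ug vh.
apply: (le_integrable mD _ _ (integrableD mD ig ih)).
  exact/measurable_realfun.measurable_EFinP/measurable_realfun.measurable_funM.
(* |u v| <= u^2 + v^2 <= g + h *)
move=> x Dx; rewrite /= lee_fin normrM.
have u2 : `|u x| ^+ 2 = u x ^+ 2 by rewrite real_normK ?num_real.
have v2 : `|v x| ^+ 2 = v x ^+ 2 by rewrite real_normK ?num_real.
have := ug x Dx; have := vh x Dx; have := normr_ge0 (u x); have := normr_ge0 (v x).
rewrite [`|g x + h x|]ger0_norm; first nra.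
by apply: addr_ge0; [apply: le_trans (ug x Dx) | apply: le_trans (vh x Dx)];
  exact: sqr_ge0.
Qed.

Lemma cintegrable0 : cintegrable (fun _ => 0).
Proof. by split; apply: eq_integrable mD _ _ _ (integrable0 mu D). Qed.

Lemma cintegrableD g h :
  cintegrable g -> cintegrable h -> cintegrable (fun x => g x + h x).
Proof.
move=> [g1 g2] [h1 h2]; split.
- by apply: eq_integrable mD _ _ _ (integrableD mD g1 h1) => x _ /=; rewrite raddfD.
- by apply: eq_integrable mD _ _ _ (integrableD mD g2 h2) => x _ /=; rewrite raddfD.
Qed.

Lemma cintegrableZ c g : cintegrable g -> cintegrable (fun x => c * g x).
Proof.
move=> [g1 g2]; split.
- apply: eq_integrable mD _ _ _ (integrableB mD
    (integrableZl mD (complex.Re c) g1) (integrableZl mD (complex.Im c) g2)) => x _ /=.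
  by rewrite ReM EFinB !EFinM.
- apply: eq_integrable mD _ _ _ (integrableD mD
    (integrableZl mD (complex.Re c) g2) (integrableZl mD (complex.Im c) g1)) => x _ /=.
  by rewrite ImM EFinD !EFinM.
Qed.

Lemma cintegrable_sum (I : Type) (s : seq I) (h : I -> T -> R[i]) :
  (forall i, cintegrable (h i)) -> cintegrable (fun x => \sum_(i <- s) h i x).
Proof.
move=> ih; elim: s => [|i s IHs].
  by under [fun x => _]funext do rewrite big_nil; exact: cintegrable0.
under [fun x => _]funext do rewrite big_cons; exact: cintegrableD.
Qed.

End ComplexIntegrable.

Section LebesgueR3.
Context {R : realType} {A : set (R3 R)} (mA : measurable A).
Local Notation mu := (leb3 R).
Local Notation cintegrable := (cintegrable mu A).

Lemma cintD g h : cintegrable g -> cintegrable h ->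
  cint A (fun x => g x + h x) = cint A g + cint A h.
Proof.
move=> [g1 g2] [h1 h2]; rewrite /cint.
under eq_Rintegral do rewrite raddfD.
under [X in _ + _ * real_complex R X]eq_Rintegral do rewrite raddfD.
by rewrite (RintegralD mA g1 h1) (RintegralD mA g2 h2) !rmorphD /=; ring.
Qed.

Lemma cintB g h : cintegrable g -> cintegrable h ->
  cint A (fun x => g x - h x) = cint A g - cint A h.
Proof.
move=> [g1 g2] [h1 h2]; rewrite /cint.
under eq_Rintegral do rewrite raddfB.
under [X in _ + _ * real_complex R X]eq_Rintegral do rewrite raddfB.
by rewrite (RintegralB mA g1 h1) (RintegralB mA g2 h2) !rmorphB /=; ring.
Qed.

Lemma cintZ c g : cintegrable g -> cint A (fun x => c * g x) = c * cint A g.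
Proof.
move=> [g1 g2]; rewrite /cint.
under eq_Rintegral do rewrite ReM.
under [X in _ + _ * real_complex R X]eq_Rintegral do rewrite ImM.
rewrite (RintegralB mA (integrableZl mA _ g1) (integrableZl mA _ g2)).
rewrite (RintegralD mA (integrableZl mA _ g2) (integrableZl mA _ g1)).
rewrite !RintegralZl // !rmorphB !rmorphD !rmorphM /=.
move: (Rintegral _ _ _) (Rintegral _ _ _) => a b.
case: c => p q; apply/eqP; rewrite eq_complex /=; apply/andP; split; apply/eqP; ring.
Qed.

Lemma cint_sum (I : Type) (s : seq I) (h : I -> R3 R -> R[i]) :
  (forall i, cintegrable (h i)) ->
  cint A (fun x => \sum_(i <- s) h i x) = \sum_(i <- s) cint A (h i).
Proof.
move=> ih; elim: s => [|i s IHs].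
  rewrite big_nil /cint; under eq_Rintegral do rewrite big_nil.
  under [X in _ + _ * real_complex R X]eq_Rintegral do rewrite big_nil.
  by rewrite Rintegral_cst // !mul0r mulr0 addr0.
under [fun x => _]funext do rewrite big_cons.
by rewrite cintD ?IHs ?big_cons //; exact: cintegrable_sum.
Qed.

Lemma inL2_integrable_cnorm2 {f} : inL2 A f ->
  mu.-integrable A (EFin \o (fun x => cnorm2 (f x))).
Proof.
case=> mRe mIm fin; apply/integrableP; split.
  apply/measurable_realfun.measurable_EFinP.
  by apply: measurable_realfun.measurable_funD; exact: measurable_realfun.measurable_funX.
rewrite (eq_integral (fun x => (cnorm2 (f x))%:E)) // => x _.
by rewrite /= ger0_norm // addr_ge0 ?sqr_ge0.
Qed.

Lemma cintegrable_conjM {a b} : inL2 A a -> inL2 A b ->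
  cintegrable (fun x => complex.conjc (a x) * b x).
Proof.
move=> La Lb; have [mRa mIa _] := La; have [mRb mIb _] := Lb.
have Re_le (f : R3 R -> R[i]) x : complex.Re (f x) ^+ 2 <= cnorm2 (f x).
  by rewrite lerDl sqr_ge0.
have Im_le (f : R3 R -> R[i]) x : complex.Im (f x) ^+ 2 <= cnorm2 (f x).
  by rewrite lerDr sqr_ge0.
have iM (u v : R3 R -> R) : measurable_fun A u -> measurable_fun A v ->
    (forall x, u x ^+ 2 <= cnorm2 (a x)) -> (forall x, v x ^+ 2 <= cnorm2 (b x)) ->
    mu.-integrable A (EFin \o (u \* v)).
  move=> mu_ mv ua vb.
  exact: (integrableM_sqr_le mA mu_ mv (inL2_integrable_cnorm2 La)
    (inL2_integrable_cnorm2 Lb) (fun x _ => ua x) (fun x _ => vb x)).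
split.
- apply: eq_integrable mA _ _ _ (integrableD mA
    (iM _ _ mRa mRb (Re_le a) (Re_le b)) (iM _ _ mIa mIb (Im_le a) (Im_le b))).
  by move=> x _ /=; rewrite ReM ReJ ImJ mulNr opprK EFinD.
- apply: eq_integrable mA _ _ _ (integrableB mA
    (iM _ _ mRa mIb (Re_le a) (Im_le b)) (iM _ _ mIa mRb (Im_le a) (Re_le b))).
  by move=> x _ /=; rewrite ImM ReJ ImJ mulNr EFinB.
Qed.

End LebesgueR3.

Section FiniteRankPerturbation.
Context {R : realType} {N : nat} {A : set (R3 R)} {phi : 'I_N -> R3 R -> R[i]}.
Hypothesis mA : measurable A.
Hypothesis phiL2 : forall n, inL2 A (phi n).

Definition phi_inner (f : R3 R -> R[i]) : 'cV[R[i]]_N :=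
  \col_j cint A (fun r => complex.conjc (phi j r) * f r).

Definition phi_comb (v : 'cV[R[i]]_N) (r : R3 R) : R[i] := \sum_i phi i r * v i 0.

Lemma phi_combD v w r : phi_comb (v + w) r = phi_comb v r + phi_comb w r.
Proof. by rewrite /phi_comb -big_split; apply: eq_bigr => i _; rewrite mxE mulrDr. Qed.

Lemma phi_combB v w r : phi_comb (v - w) r = phi_comb v r - phi_comb w r.
Proof. by rewrite /phi_comb -sumrB; apply: eq_bigr => i _; rewrite !mxE mulrBr. Qed.

Lemma TopE M f : Top A phi M f = fun r => f r - phi_comb (M *m phi_inner f) r.
Proof.
apply: funext => r; rewrite /Top /phi_comb; congr (_ - _); apply: eq_bigr => i _.
by rewrite mxE mulr_sumr; apply: eq_bigr => j _; rewrite mxE mulrA.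
Qed.

Lemma phi_inner_Top M f : inL2 A f ->
  phi_inner (Top A phi M f) = phi_inner f - gram A phi *m (M *m phi_inner f).
Proof.
move=> fL2; apply/matrixP => k z; rewrite (ord1 z) !mxE TopE.
set w := M *m phi_inner f.
have wphi i : cintegrable (leb3 R) A
    (fun r => w i 0 * (complex.conjc (phi k r) * phi i r)).
  exact: (cintegrableZ mA _ _ (cintegrable_conjM mA (phiL2 k) (phiL2 i))).
have -> : (fun r => complex.conjc (phi k r) * (f r - phi_comb w r)) =
    fun r => complex.conjc (phi k r) * f r
             - \sum_i w i 0 * (complex.conjc (phi k r) * phi i r).
  apply: funext => r; rewrite mulrBr mulr_sumr; congr (_ - _).
  by apply: eq_bigr => i _; ring.
rewrite (cintB mA _ _ (cintegrable_conjM mA (phiL2 k) fL2)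
                     (cintegrable_sum mA _ _ _ wphi)).
rewrite (cint_sum mA _ _ _ wphi); congr (_ - _); apply: eq_bigr => i _.
by rewrite (cintZ mA _ _ (cintegrable_conjM mA (phiL2 k) (phiL2 i))) mulrC !mxE.
Qed.

Lemma Top_Top M f : inL2 A f ->
  Top A phi M (Top A phi M f) = Top A phi (M + M - M *m gram A phi *m M) f.
Proof.
move=> fL2; rewrite [in LHS]TopE phi_inner_Top // !TopE; apply: funext => r.
rewrite mulmxBr mulmxBl mulmxDl -!mulmxA !phi_combB !phi_combD; ring.
Qed.

End FiniteRankPerturbation.

Section SpectralCalculus.
Context {R : rcfType} {N : nat} {U : 'M[R[i]]_N}.

Definition spectral_mx (g : 'I_N -> R) : 'M[R[i]]_N :=
  U *m diag_mx (\row_n real_complex R (g n)) *m adjmx U.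

Lemma spectral_mxD g h :
  spectral_mx g + spectral_mx h = spectral_mx (fun n => g n + h n).
Proof.
rewrite /spectral_mx -mulmxDl -mulmxDr -raddfD /=; congr (_ *m diag_mx _ *m _).
by apply/rowP => n; rewrite !mxE rmorphD.
Qed.

Lemma spectral_mxN g : - spectral_mx g = spectral_mx (fun n => - g n).
Proof.
rewrite /spectral_mx -mulNmx -mulmxN -raddfN /=; congr (_ *m diag_mx _ *m _).
by apply/rowP => n; rewrite !mxE rmorphN.
Qed.

Lemma spectral_mxM g h : adjmx U *m U = 1%:M ->
  spectral_mx g *m spectral_mx h = spectral_mx (fun n => g n * h n).
Proof.
move=> UhU; rewrite /spectral_mx !mulmxA -[_ *m adjmx U *m U]mulmxA UhU mulmx1.
rewrite -[U *m _ *m _]mulmxA mulmx_diag; congr (_ *m diag_mx _ *m _).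
by apply/rowP => n; rewrite !mxE rmorphM.
Qed.

Lemma spectral_mx1 : U *m adjmx U = 1%:M -> spectral_mx (fun _ => 1) = 1%:M.
Proof.
move=> UUh; rewrite /spectral_mx.
have -> : \row_n real_complex R 1 = const_mx 1 :> 'rV_N.
  by apply/rowP => n; rewrite !mxE.
by rewrite diag_const_mx mulmx1.
Qed.

Lemma invmx_spectral_mx g : unitary U -> (forall n, g n != 0) ->
  invmx (spectral_mx g) = spectral_mx (fun n => (g n)^-1).
Proof.
move=> [UUh UhU] g_neq0.
have gVg : spectral_mx g *m spectral_mx (fun n => (g n)^-1) = 1%:M.
  by rewrite spectral_mxM //; under eq_fun do rewrite divff //; exact: spectral_mx1.
by rewrite -[RHS]mul1mx -(mulVmx (proj1 (mulmx1_unit gVg))) -mulmxA gVg mulmx1.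
Qed.

Lemma spectral_mx_quad d l : adjmx U *m U = 1%:M ->
  spectral_mx d + spectral_mx d - spectral_mx d *m spectral_mx l *m spectral_mx d
  = spectral_mx (fun n => d n + d n - d n * l n * d n).
Proof. by move=> UhU; rewrite !spectral_mxM // spectral_mxN !spectral_mxD. Qed.

End SpectralCalculus.
Arguments spectral_mx {R N} U g.

Section Coefficients.
Variables (R : rcfType) (l : R).
Hypothesis l_gt0 : 0 < l.

Local Notation s := (Num.sqrt (1 + l)).

Let s_gt0 : 0 < s. Proof. by rewrite sqrtr_gt0 addr_gt0. Qed.

Let l_sqr : l = s ^+ 2 - 1.
Proof. by rewrite sqr_sqrtr; [ring | rewrite addr_ge0 // ltW]. Qed.

Lemma Bbar_coef_quad (d := (1 + s) / (l * s)) : d + d - d * l * d = (1 + l)^-1.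
Proof.
(* Generalizing the square root keeps [l = s^2 - 1] from rewriting under it. *)
rewrite /d; move: s_gt0 l_sqr l_gt0; move: (Num.sqrt _) => t t_gt0 -> t2B1_gt0.
have t_neq0 : t != 0 by rewrite gt_eqF.
field; by rewrite addrC subrK sqrf_eq0 t_neq0 gt_eqF.
Qed.

Lemma B_coef_quad (d := (1 + s) / l) : d + d - d * l * d = -1.
Proof.
rewrite /d; move: l_sqr l_gt0; move: (Num.sqrt _) => t -> t2B1_gt0.
by field; rewrite gt_eqF.
Qed.

End Coefficients.

Theorem corollary1 (R : realType) (N : nat) (A : set (R3 R))
  (phi : 'I_N -> R3 R -> R[i]) (U : 'M[R[i]]_N) (lam : 'I_N -> R) :
  measurable A ->
  (forall n, inL2 A (phi n)) ->
  (forall (m n : 'I_N), m != n -> forall c : R[i],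
      ~ {ae leb3 R, forall x, A x -> phi m x = c * phi n x}) ->
  posdef (gram A phi) ->
  unitary U ->
  (forall n, 0 < lam n) ->
  gram A phi = U *m diag_mx (\row_n real_complex R (lam n)) *m adjmx U ->
  forall f : R3 R -> R[i], inL2 A f ->
  forall r, A r ->
    Top A phi (Bbar_mx U lam) (Top A phi (Bbar_mx U lam) f) r
      = Top A phi (invmx (1%:M + gram A phi)) f r
  /\ Top A phi (B_mx U lam) (Top A phi (B_mx U lam) f) r
      = Top A phi (- 1%:M) f r.
Proof.
move=> mA phiL2 _ _ U_unitary lam_gt0 gramE f fL2 r _.
have [UUh UhU] := U_unitary.
have {}gramE : gram A phi = spectral_mx U lam by [].
have BbarE : Bbar_mx U lam = spectral_mx U
    (fun n => (1 + Num.sqrt (1 + lam n)) / (lam n * Num.sqrt (1 + lam n))) by [].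
have BE : B_mx U lam = spectral_mx U (fun n => (1 + Num.sqrt (1 + lam n)) / lam n).
  by [].
have lam1_neq0 n : 1 + lam n != 0 by rewrite gt_eqF ?addr_gt0.
rewrite !(Top_Top mA phiL2 _ _ fL2) gramE BbarE BE.
split; congr (Top _ _ _ f r); rewrite spectral_mx_quad //.
- rewrite -(spectral_mx1 UUh) spectral_mxD invmx_spectral_mx //.
  by congr (spectral_mx U _); apply: funext => n; exact: Bbar_coef_quad.
- rewrite -(spectral_mx1 UUh) spectral_mxN.
  by congr (spectral_mx U _); apply: funext => n; exact: B_coef_quad.
Qed.
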